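(* Let $G=(V,E,s_0,s_1)$ be a switch graph, $o,d\in V$ with $o\neq d$, and let $e=(v,w)\in E$ be a hopeful edge of desperation $k$. Then $\textsc{Run}(G,o,d)$ traverses $e$ at most $2^{k+1}-1$ times.
   Context: A switch graph is a 4-tuple $G=(V,E,s_0,s_1)$ where $V$ is a finite vertex set, $s_0,s_1:V\to V$, and $E=\{(v,s_0(v)):v\in V\}\cup\{(v,s_1(v)):v\in V\}$ (loops allowed; possibly $s_0(v)=s_1(v)$). The procedure $\textsc{Run}(G,o,d)$: maintain arrays $\mathtt{s\_curr},\mathtt{s\_next}$ indexed by $V$, initially $\mathtt{s\_curr}[v]=s_0(v)$, $\mathtt{s\_next}[v]=s_1(v)$; set $v:=o$; while $v\neq d$: $w:=\mathtt{s\_curr}[v]$, swap $\mathtt{s\_curr}[v],\mathtt{s\_next}[v]$, $v:=w$ (traversing edge $(v,w)$); the run may be infinite. A dead end is a vertex from which there is no directed path to $d$ in the directed graph $(V,E)$. An edge $(v,w)$ is dead if $w$ is a dead end, and hopeful otherwise; the desperation of a hopeful edge $(v,w)$ is the length of a shortest directed path from $w$ to $d$ in $(V,E)$ (so desperation $0$ means $w=d$). *)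

From mathcomp Require Import all_boot.
Set Implicit Arguments. Unset Strict Implicit. Unset Printing Implicit Defensive.

Definition sw_edge (V : finType) (s0 s1 : V -> V) : rel V :=
  [rel x y | (y == s0 x) || (y == s1 x)].

Record run_state (V : finType) := RunState {
  rs_pos  : V;
  rs_curr : V -> V;
  rs_next : V -> V }.

(* One iteration of the while loop; once v = d the run has stopped,
   and the state is left unchanged. *)
Definition run_step (V : finType) (d : V) (st : run_state V) : run_state V :=
  let v := rs_pos st in
  if v == d then st else
  let w := rs_curr st v in
  RunState w
    (fun u => if u == v then rs_next st v else rs_curr st u)
    (fun u => if u == v then rs_curr st v else rs_next st u).

Fixpoint run_state_at (V : finType) (s0 s1 : V -> V) (o d : V) (n : nat)
  : run_state V :=
  match n with
  | 0 => RunState o s0 s1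
  | n'.+1 => run_step d (run_state_at s0 s1 o d n')
  end.

Definition traverses_at (V : finType) (s0 s1 : V -> V) (o d v w : V) (i : nat)
  : bool :=
  let st := run_state_at s0 s1 o d i in
  [&& rs_pos st != d, rs_pos st == v & rs_curr st v == w].

Definition traversals (V : finType) (s0 s1 : V -> V) (o d v w : V) (n : nat)
  : nat :=
  \sum_(i < n) traverses_at s0 s1 o d v w i.

Definition dead_end (V : finType) (s0 s1 : V -> V) (d x : V) : bool :=
  ~~ connect (sw_edge s0 s1) x d.

Definition path_len (V : finType) (s0 s1 : V -> V) (d x : V) (k : nat) : Prop :=
  exists p : seq V, [/\ path (sw_edge s0 s1) x p, last x p = d & size p = k].

Definition desperation (V : finType) (s0 s1 : V -> V) (d w : V) (k : nat) : Prop :=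
  path_len s0 s1 d w k /\ forall j, j < k -> ~ path_len s0 s1 d w j.

From mathcomp Require Import all_boot.
From mathcomp Require Import zify.

Set Implicit Arguments. Unset Strict Implicit. Unset Printing Implicit Defensive.

(* The switch at a vertex w flips at every departure from w, so for each
   successor x of w the edge (w, x) is used by at least every other departure:
   departures from w are at most 2 * traversals of (w, x) + 1.  Every traversal
   of an edge into w != d is followed by a departure from w, and d is entered at
   most once.  Along a path w = x_0, ..., x_k = d, traversals into a vertex at
   distance j from d are therefore bounded by b_j with b_0 = 1 and
   b_(j+1) = 2 b_j + 1, i.e. b_j = 2^(j+1) - 1. *)

Section Run.

Variables (V : finType) (s0 s1 : V -> V) (o d : V).

Local Notation st n := (run_state_at s0 s1 o d n).
Local Notation running n := (rs_pos (st n) != d).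

Definition departures (w : V) (n : nat) : nat :=
  \sum_(i < n) (running i && (rs_pos (st i) == w)).

Lemma departuresS w n :
  departures w n.+1 = departures w n + (running n && (rs_pos (st n) == w)).
Proof. by rewrite /departures big_ord_recr. Qed.

Lemma traversalsS v w n :
  traversals s0 s1 o d v w n.+1 =
  traversals s0 s1 o d v w n + traverses_at s0 s1 o d v w n.
Proof. by rewrite /traversals big_ord_recr. Qed.

Lemma departures_dest n : departures d n = 0.
Proof. by rewrite /departures big1 // => i _; case: eqP. Qed.

Lemma rs_pos_step n :
  rs_pos (st n.+1) = if running n then rs_curr (st n) (rs_pos (st n))
                     else rs_pos (st n).
Proof. by rewrite /= /run_step; case: eqP. Qed.

Lemma rs_curr_step n u :
  rs_curr (st n.+1) u = if running n && (u == rs_pos (st n))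
                        then rs_next (st n) u else rs_curr (st n) u.
Proof. by rewrite /= /run_step; case: eqP => //= _; case: eqP => // ->. Qed.

Lemma switch_perm n u :
  perm_eq [:: rs_curr (st n) u; rs_next (st n) u] [:: s0 u; s1 u].
Proof.
elim: n => [|n IH] //; rewrite rs_curr_step /= /run_step.
case: eqP => //= _; case: (u =P _) => [<-|_] //.
by apply: perm_trans IH; rewrite (perm_catC [:: _]).
Qed.

Lemma switch_next n u x :
  sw_edge s0 s1 u x -> rs_curr (st n) u != x -> rs_next (st n) u = x.
Proof.
move=> ux; have : x \in [:: s0 u; s1 u] by rewrite !inE.
rewrite -(perm_mem (switch_perm n u)) !inE eq_sym => /orP[/eqP->|/eqP->//].
by rewrite eqxx.
Qed.

Lemma departures_le_traversals w x n :
  sw_edge s0 s1 w x ->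
  departures w n <= 2 * traversals s0 s1 o d w x n + (rs_curr (st n) w == x).
Proof.
move=> wx; elim: n => [|n IH]; first by rewrite /departures /traversals !big_ord0.
rewrite departuresS traversalsS rs_curr_step /traverses_at.
case: (running n) IH => //= IH; last by lia.
case: (rs_pos (st n) =P w) => [->|ne] /=; last first.
  by rewrite (introF eqP (nesym ne)) /=; lia.
rewrite eqxx /=; case: (rs_curr (st n) w =P x) => [_|/eqP cx] /=; first by lia.
by rewrite (switch_next wx cx) eqxx; lia.
Qed.

Lemma traversals_le_departures v w n :
  traversals s0 s1 o d v w n <= departures w n + (rs_pos (st n) == w).
Proof.
elim: n => [|n IH]; first by rewrite /departures /traversals !big_ord0.
rewrite departuresS traversalsS rs_pos_step /traverses_at.
case: (running n) IH => //= IH; last by lia.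
by case: (rs_pos (st n) =P v) IH => [->|_] /= IH; lia.
Qed.

Lemma traversals_dest_le1 v n : traversals s0 s1 o d v d n <= 1.
Proof.
apply: leq_trans (traversals_le_departures v d n) _.
by rewrite departures_dest leq_b1.
Qed.

Lemma traversals_le_departuresS v w n :
  w != d -> traversals s0 s1 o d v w n <= departures w n.+1.
Proof.
move=> wd; have := traversals_le_departures v w n.
by rewrite departuresS; case: eqP => [->|] /=; rewrite ?wd; lia.
Qed.

Lemma traversals_lt_path p w :
  path (sw_edge s0 s1) w p -> last w p = d ->
  forall v n, traversals s0 s1 o d v w n < 2 ^ (size p).+1.
Proof.
have hd v n m : traversals s0 s1 o d v d n < 2 ^ m.+1.
  apply: leq_ltn_trans (traversals_dest_le1 v n) _.
  by rewrite -{1}(expn0 2) ltn_exp2l.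
elim: p w => [|x p IH] w /=; first by move=> _ -> v n; apply: hd.
case/andP=> wx xp xd v n; case: (w =P d) => [->|/eqP wd]; first exact: hd.
have := traversals_le_departuresS v n wd.
have := departures_le_traversals n.+1 wx.
have := IH x xp xd w n.+1.
by rewrite [2 ^ _.+2]expnS; case: (_ == x) => /=; lia.
Qed.

End Run.

Theorem lemma2 (V : finType) (s0 s1 : V -> V) (o d v w : V) (k : nat) :
  o != d ->
  sw_edge s0 s1 v w ->
  ~~ dead_end s0 s1 d w ->
  desperation s0 s1 d w k ->
  forall n : nat, traversals s0 s1 o d v w n <= 2 ^ k.+1 - 1.
Proof.
move=> _ _ _ [[p [wp pd <-]] _] n.
by rewrite -ltnS subn1 prednK ?expn_gt0 // (traversals_lt_path o wp pd).
Qed.
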